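(* Let $P(t)=\sum_{i=0}^d\binom{t+i}{i+1}-\binom{t+i-e_i}{i+1}$ with integers $e_0\ge e_1\ge\dots\ge e_d>0$, and let $n\in\mathbb{N}$ with $n>d=\deg P$. (i) Set $e_i:=0$ for $d+1\le i\le n$ and $a_j:=e_j-e_{j+1}$ for $0\le j\le n-1$. Then $L^P_n=L(a_0,\dots,a_{n-1})=\langle x_0,x_1,\dots,x_{n-(d+2)},\ x_{n-(d+1)}^{a_d+1},\ x_{n-(d+1)}^{a_d}x_{n-d}^{a_{d-1}+1},\ \dots,\ x_{n-(d+1)}^{a_d}x_{n-d}^{a_{d-1}}\cdots x_{n-3}^{a_2}x_{n-2}^{a_1+1},\ x_{n-(d+1)}^{a_d}x_{n-d}^{a_{d-1}}\cdots x_{n-2}^{a_1}x_{n-1}^{a_0}\rangle$. (ii) If there is an integer $0\le\ell\le d-1$ with $a_j=0$ for all $j\le\ell$ and $a_{\ell+1}>0$, then the minimal monomial generators of $L^P_n$ are $m_1,\dots,m_{n-(\ell+1)}$, where $m_i:=x_{i-1}$ for $1\le i\le n-(d+1)$, $m_{n-d+k}:=\big(\prod_{j=0}^{k-1}x_{n-(d+1)+j}^{a_{d-j}}\big)x_{n-(d+1)+k}^{a_{d-k}+1}$ for $0\le k\le d-(\ell+2)$, and $m_{n-(\ell+1)}:=\prod_{j=0}^{d-(\ell+1)}x_{n-(d+1)+j}^{a_{d-j}}$. If $a_0\ne0$, then the minimal monomial generators are those listed in (i).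
   Context: $\Bbbk$ is an algebraically closed field and $\Bbbk[x_0,\dots,x_n]$ the standard graded polynomial ring. Binomial coefficients are polynomials: $\binom{t+a}{b}=\frac{(t+a)\cdots(t+a-b+1)}{b!}$ for $b\ge0$, $0$ for $b<0$. For $a_0,\dots,a_{n-1}\in\mathbb{N}$, $L(a_0,\dots,a_{n-1})$ is the monomial ideal generated by $x_0^{a_{n-1}+1},\ x_0^{a_{n-1}}x_1^{a_{n-2}+1},\ \dots,\ x_0^{a_{n-1}}\cdots x_{n-3}^{a_2}x_{n-2}^{a_1+1},\ x_0^{a_{n-1}}\cdots x_{n-2}^{a_1}x_{n-1}^{a_0}$. Lexicographic order: $x^u>x^v$ if the first nonzero coordinate of $u-v$ is positive. For a homogeneous ideal $I$ with Hilbert function $H$ (of the quotient), $L^H_n$ is the monomial ideal whose degree-$i$ piece is spanned by the $\dim_\Bbbk I_i$ lexicographically largest monomials of degree $i$; the lexicographic ideal $L^P_n$ is the saturation $\bigcup_{j\ge1}\{f: f\langle x_0,\dots,x_n\rangle^j\subseteq L^{H_I}_n\}$ for any homogeneous ideal $I$ whose Hilbert polynomial is $P$ (this is independent of the choice of $I$). *)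

(* with multinomials' mpoly.  Polynomial ring k[x_0,...,x_n]
   is {mpoly K[n.+1]}; variable x_i is 'X_i with i : 'I_n.+1. *)
From HB Require Import structures.
From mathcomp Require Import all_boot all_order all_algebra.
From mathcomp Require Import mpoly.
Set Implicit Arguments. Unset Strict Implicit. Unset Printing Implicit Defensive.
Import Order.TTheory GRing.Theory Num.Theory.
Local Open Scope ring_scope.

Section Defs.
Variable (K : fieldType) (n : nat).
Local Notation S := {mpoly K[n.+1]}.
Local Notation mon := 'X_{1..n.+1}.

(* the variable x_i, for a natural-number index i (used only with i <= n) *)
Definition xv (i : nat) : S := 'X_(inord i).

Definition homog_of (i : nat) (f : S) : Prop :=
  forall m, m \in msupp f -> mdeg m = i.

Definition hcomp (i : nat) (f : S) : S :=
  \sum_(m <- msupp f | mdeg m == i) f@_m *: 'X_[m].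

Definition is_ideal (I : S -> Prop) : Prop :=
  [/\ I 0, (forall f g, I f -> I g -> I (f + g)) & (forall r f, I f -> I (r * f))].

Definition homog_ideal (I : S -> Prop) : Prop :=
  is_ideal I /\ (forall f, I f -> forall i, I (hcomp i f)).

Definition ideal_gen (G : S -> Prop) (f : S) : Prop :=
  exists s : seq (S * S), (forall p, p \in s -> G p.2) /\
                          f = \sum_(p <- s) p.1 * p.2.

Definition lin_indep (s : seq S) : Prop :=
  forall c : seq K, size c = size s ->
    \sum_(i < size s) c`_i *: s`_i = 0 -> forall i, (i < size s)%N -> c`_i = 0.

Definition dim_is (V : S -> Prop) (D : nat) : Prop :=
  (exists s : seq S, size s = D /\ (forall i, (i < size s)%N -> V s`_i) /\ lin_indep s)
  /\ (forall s : seq S, (forall i, (i < size s)%N -> V s`_i) -> lin_indep s ->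
        (size s <= D)%N).

Definition piece (I : S -> Prop) (i : nat) (f : S) : Prop := I f /\ homog_of i f.

(* Hilbert function of S/I: H_I(i) = dim_k (S/I)_i = dim S_i - dim I_i *)
Definition hilbfun_is (I : S -> Prop) (i h : nat) : Prop :=
  exists dS dI, dim_is (homog_of i) dS /\ dim_is (piece I i) dI /\ h = (dS - dI)%N.

Definition has_hilb_poly (I : S -> Prop) (P : rat -> rat) : Prop :=
  exists i0, forall i, (i0 <= i)%N -> exists h, hilbfun_is I i h /\ h%:R = P i%:R.

Definition lexgt (u v : mon) : bool :=
  [exists k : 'I_n.+1, [forall j : 'I_n.+1, (j < k)%N ==> (u j == v j)] && (v k < u k)%N].
Definition lexge (u v : mon) : bool := (u == v) || lexgt u v.

Definition lexrank (u : mon) : nat :=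
  #|[pred v : 'X_{1..n.+1 < (mdeg u).+1} | (mdeg v == mdeg u) && lexge v u]|.

Definition lex_selected (I : S -> Prop) (u : mon) : Prop :=
  exists D, dim_is (piece I (mdeg u)) D /\ (lexrank u <= D)%N.

(* L^{H_I}_n : the monomial ideal whose degree-i piece is spanned by the selected
   monomials, i.e. f belongs iff every monomial of f is selected *)
Definition lexH (I : S -> Prop) (f : S) : Prop :=
  forall u, u \in msupp f -> lex_selected I u.

Definition maxpow (j : nat) : S -> Prop :=
  ideal_gen (fun g => exists m : mon, mdeg m = j /\ g = 'X_[m]).

(* saturation of L^{H_I}_n ; this is L^P_n when I has Hilbert polynomial P *)
Definition lexsat (I : S -> Prop) (f : S) : Prop :=
  exists j, (1 <= j)%N /\ forall g, maxpow j g -> lexH I (f * g).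

(* L(a_0,...,a_{n-1}): generator number k (0 <= k <= n-1) is
   x_0^{a_{n-1}} ... x_{k-1}^{a_{n-k}} x_k^{a_{n-1-k}+1} for k <= n-2 and
   x_0^{a_{n-1}} ... x_{n-2}^{a_1} x_{n-1}^{a_0} for k = n-1 *)
Definition Lgen (a : nat -> nat) (k : nat) : S :=
  (\prod_(j < k) xv j ^+ a (n.-1 - j)%N) *
  xv k ^+ (a (n.-1 - k)%N + (if (k < n.-1)%N then 1 else 0))%N.

Definition Lideal (a : nat -> nat) : S -> Prop :=
  ideal_gen (fun g => exists2 k, (k < n)%N & g = Lgen a k).

Definition midgen (d : nat) (a : nat -> nat) (k : nat) : S :=
  (\prod_(j < k) xv (n - d.+1 + j) ^+ a (d - j)%N) * xv (n - d.+1 + k) ^+ (a (d - k)%N).+1.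
Definition lastgen (d : nat) (a : nat -> nat) (t : nat) : S :=
  \prod_(j < t.+1) xv (n - d.+1 + j) ^+ a (d - j)%N.

Definition explicit_gens (d : nat) (a : nat -> nat) (g : S) : Prop :=
  (exists2 j, (j < n - d.+1)%N & g = xv j) \/
  (exists2 k, (k < d)%N & g = midgen d a k) \/
  g = lastgen d a d.

Definition min_mon_gen (J : S -> Prop) (u : mon) : Prop :=
  J 'X_[u] /\ forall v : mon, J 'X_[v] -> lem v u -> v = u.

End Defs.

Definition binq (x : rat) (b : nat) : rat :=
  (\prod_(j < b) (x - j%:R)) / (b`!)%:R.

Definition hilbP (d : nat) (e : nat -> nat) (t : rat) : rat :=
  \sum_(i < d.+1) (binq (t + i%:R) i.+1 - binq (t + i%:R - (e i)%:R) i.+1).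

Definition eext (d : nat) (e : nat -> nat) (i : nat) : nat := if (i <= d)%N then e i else 0%N.
Definition adiff (d : nat) (e : nat -> nat) (j : nat) : nat := (eext d e j - eext d e j.+1)%N.

Arguments xv {K n} i.
Arguments homog_of {K n} i f.
Arguments hcomp {K n} i f.
Arguments is_ideal {K n} I.
Arguments homog_ideal {K n} I.
Arguments ideal_gen {K n} G f.
Arguments lin_indep {K n} s.
Arguments dim_is {K n} V D.
Arguments piece {K n} I i f.
Arguments hilbfun_is {K n} I i h.
Arguments has_hilb_poly {K n} I P.
Arguments lexgt {n} u v.
Arguments lexge {n} u v.
Arguments lexrank {n} u.
Arguments lex_selected {K n} I u.
Arguments lexH {K n} I f.
Arguments maxpow {K n} j _.
Arguments lexsat {K n} I f.
Arguments Lgen {K n} a k.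
Arguments Lideal {K n} a _.
Arguments midgen {K n} d a k.
Arguments lastgen {K n} d a t.
Arguments explicit_gens {K n} d a g.
Arguments min_mon_gen {K n} J u.

From HB Require Import structures.
From mathcomp Require Import all_boot all_order all_algebra.
From mathcomp Require Import mpoly.
From mathcomp Require Import ring zify.
Set Implicit Arguments. Unset Strict Implicit. Unset Printing Implicit Defensive.
Import Order.TTheory GRing.Theory Num.Theory.
Local Open Scope ring_scope.

(* Let w_k be the exponent of the k-th generator of
   L = L(a_0, ..., a_{n-1}).  A monomial x^u lies in L exactly when
   (u_0, ..., u_{n-1}) is lexicographically at least (a_{n-1}, ..., a_0): the
   first coordinate where u leaves this sequence names a generator dividing x^u.
   So in each degree the monomials of L form an initial segment for the lex
   order, and membership ignores the exponent of x_n.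
   Counting the degree-D monomials outside L by the first coordinate where they
   drop below the bound gives sums of binomial coefficients which, for
   a_j = e_j - e_{j+1}, telescope to P(D) once D >= e_0.  Hence L has Hilbert
   polynomial P; for any I with Hilbert polynomial P the ideal L^{H_I} agrees
   with L in large degrees, and since multiplying by powers of x_n preserves
   membership in L, its saturation is L itself.
   Finally w_k' <= w_k componentwise forces k' = n-1 and a_j = 0 for
   j < n-1-k, which singles out the minimal generators of (ii). *)

(** * Binomial sums and compositions *)

Lemma binq0 (x : rat) : binq x 0 = 1.
Proof. by rewrite /binq big_ord0 fact0 divr1. Qed.

Lemma binqS (x : rat) (b : nat) : binq (x + 1) b.+1 = binq x b.+1 + binq x b.
Proof.
rewrite /binq big_ord_recl big_ord_recr /=.
have -> : \prod_(i < b) (x + 1 - (bump 0 i)%:R) = \prod_(i < b) (x - i%:R).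
  by apply: eq_bigr => i _; rewrite /bump /= add1n -natr1; ring.
rewrite factS natrM.
have b1_neq0 : (b.+1%:R : rat) != 0 by rewrite pnatr_eq0.
have fact_neq0 : ((b`!)%:R : rat) != 0 by rewrite pnatr_eq0 -lt0n fact_gt0.
by rewrite -natr1; field; rewrite natr1 b1_neq0 fact_neq0.
Qed.

Lemma binq_small (k b : nat) : (k < b)%N -> binq k%:R b = 0.
Proof. by move=> kb; rewrite /binq (bigD1 (Ordinal kb)) //= subrr !mul0r. Qed.

Lemma sum_binq_diag (y : rat) (r : nat) :
  \sum_(m < r) binq (y + m%:R) m.+1 = binq (y + r%:R) r - 1.
Proof.
elim: r => [|r IH]; first by rewrite big_ord0 binq0 subrr.
by rewrite big_ord_recr /= IH -natr1 addrA binqS; ring.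
Qed.

Lemma sum_binq_shift (y : rat) (r x : nat) :
  \sum_(c < x) binq (y - c%:R + r%:R) r =
  binq (y + r%:R + 1) r.+1 - binq (y + r%:R + 1 - x%:R) r.+1.
Proof.
elim: x => [|x IH]; first by rewrite big_ord0 subr0 subrr.
rewrite big_ord_recr /= IH -natr1.
have -> : y + r%:R + 1 - x%:R = (y - x%:R + r%:R) + 1 by ring.
have -> : y + r%:R + 1 - (x%:R + 1) = y - x%:R + r%:R by ring.
by rewrite [binq (y - x%:R + r%:R + 1) _]binqS; ring.
Qed.

Fixpoint compositions (r D : nat) : seq (seq nat) :=
  if r is r'.+1 then [seq c :: s | c <- iota 0 D.+1, s <- compositions r' (D - c)]
  else if D == 0%N then [:: [::]] else [::].

Arguments compositions : simpl never.

Lemma compositionsS r D :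
  compositions r.+1 D = [seq c :: s | c <- iota 0 D.+1, s <- compositions r (D - c)].
Proof. by []. Qed.

Lemma mem_compositions r D s :
  (s \in compositions r D) = (size s == r) && (sumn s == D).
Proof.
elim: r D s => [|r IH] D s; first by case: D => [|D]; case: s.
rewrite compositionsS; apply/allpairsPdep/idP => [[c [t [+ + ->]]]|].
  rewrite mem_iota IH /= eqSS add0n ltnS => cD /andP[-> /eqP ->].
  by rewrite subnKC ?eqxx.
case: s => [|c s] // /andP[size_s /eqP sum_s].
exists c, s; split=> //; first by rewrite mem_iota ltnS -sum_s /= leq_addr.
by rewrite IH -sum_s /= addKn -eqSS size_s eqxx.
Qed.

Lemma uniq_compositions r D : uniq (compositions r D).
Proof.
elim: r D => [|r IH] D; first by case: D.
rewrite compositionsS.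
apply: allpairs_uniq_dep => [|c _|[c s] [c' s'] _ _ /= [-> ->]] //; exact: iota_uniq.
Qed.

Lemma count_compositionsS (P : pred (seq nat)) r D :
  count P (compositions r.+1 D) =
  (\sum_(0 <= c < D.+1) count (fun s => P (c :: s)) (compositions r (D - c)))%N.
Proof.
rewrite compositionsS count_flatten -map_comp sumnE big_map /index_iota subn0.
by apply: eq_bigr => c _; rewrite /= count_map.
Qed.

Lemma size_compositionsS r D :
  size (compositions r.+1 D) = (\sum_(c < D.+1) size (compositions r (D - c)))%N.
Proof.
rewrite -count_predT count_compositionsS big_mkord.
by apply: eq_bigr => c _; exact: count_predT.
Qed.

Lemma size_compositions r D :
  ((size (compositions r.+1 D))%:R : rat) = binq (D + r)%:R r.
Proof.
elim: r D => [|r IH] D.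
  rewrite size_compositionsS binq0 big_ord_recr /= subnn /= big1 // => c _.
  by case: (D - c)%N (subn_gt0 c D) => [|k]; rewrite ?ltn_ord.
rewrite size_compositionsS natr_sum.
under eq_bigr => c _ do rewrite IH natrD natrB -1?ltnS //.
rewrite sum_binq_shift natrD.
have -> : (D%:R + r%:R + 1 - D.+1%:R : rat) = r%:R by rewrite -natr1; ring.
by rewrite binq_small // subr0 -natr1 addrA.
Qed.

Definition ncomp_below (A : seq nat) (D : nat) : nat :=
  count (fun s => (take (size A) s < A :> seqlexi nat)%O) (compositions (size A).+1 D).

Lemma ncomp_below_cons x A D : (x <= D)%N ->
  ncomp_below (x :: A) D =
  (\sum_(c < x) size (compositions (size A).+1 (D - c)) + ncomp_below A (D - x))%N.
Proof.
move=> xD; rewrite /ncomp_below count_compositionsS /=.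
rewrite (@big_cat_nat _ _ _ x) ?leqW //= (@big_ltn _ _ _ x) ?ltnS //=.
rewrite [X in (_ + (_ + X))%N]big1_seq ?addn0; last first.
  move=> c /andP[_]; rewrite mem_index_iota => /andP[xc _]; apply/eqP.
  rewrite -leqn0 leqNgt -has_count; apply/hasPn => s _ /=.
  by rewrite ltxi_cons leEnat leqNgt xc.
rewrite big_mkord; congr (_ + _)%N; last by apply: eq_count => s /=; rewrite ltxi_cons lexx.
apply: eq_bigr => c _; rewrite -[RHS]count_predT; apply: eq_count => s /=.
by rewrite ltxi_cons leEnat (ltnW (ltn_ord c)) leqNgt ltn_ord.
Qed.

Lemma ncomp_below_formula (x : nat -> nat) r D : (\sum_(j < r) x j <= D)%N ->
  ((ncomp_below (rev (mkseq x r)) D)%:R : rat) =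
  \sum_(m < r) (binq (D%:R + m%:R) m.+1 -
                binq (D%:R + m%:R - (\sum_(m <= j < r) x j)%N%:R) m.+1).
Proof.
elim: r D => [|r IH] D sum_le.
  rewrite big_ord0 /ncomp_below (eq_count (a2 := pred0)) ?count_pred0 // => s.
  by rewrite /= take0 ltxx.
rewrite big_ord_recr /= in sum_le.
have xr_le : (x r <= D)%N by apply: leq_trans sum_le; exact: leq_addl.
rewrite mkseqS rev_rcons ncomp_below_cons // size_rev size_mkseq natrD.
rewrite IH ?leq_subRL ?[(x r + _)%N]addnC // natr_sum.
under eq_bigr => c _.
  rewrite size_compositions natrD natrB; last exact: leq_trans (ltnW (ltn_ord c)) xr_le.
  over.
rewrite sum_binq_shift natrB // big_ord_recr /= big_nat1 !sumrB !sum_binq_diag.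
set S := \sum_(i < r) binq (D%:R - (x r)%:R + i%:R - (\sum_(i <= j < r) x j)%N%:R) i.+1.
have -> : \sum_(i < r) binq (D%:R + i%:R - (\sum_(i <= j < r.+1) x j)%N%:R) i.+1 = S.
  apply: eq_bigr => i _; rewrite big_nat_recr /=; last exact: ltnW.
  by congr (binq _ _); rewrite natrD; ring.
rewrite !binqS.
have -> : D%:R + r%:R - (x r)%:R = D%:R - (x r)%:R + r%:R :> rat by ring.
have -> : D%:R + r%:R + 1 - (x r)%:R = D%:R - (x r)%:R + r%:R + 1 :> rat by ring.
rewrite binqS; ring.
Qed.

Lemma telescope_sumn_nonincr (f : nat -> nat) m n :
  (forall j, (f j.+1 <= f j)%N) -> (m <= n)%N ->
  (\sum_(m <= j < n) (f j - f j.+1) = f m - f n)%N.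
Proof.
move=> f_nonincr.
have f_anti : {homo f : i j / (i <= j)%N >-> (j <= i)%N}.
  by apply: homo_leq => // [y x z /[swap]]; exact: leq_trans.
elim: n => [|n IH] mn; first by move: mn; rewrite leqn0 => /eqP ->; rewrite big_geq ?subnn.
case: (ltngtP m n.+1) mn => // [mn _|-> _]; last by rewrite big_geq ?subnn.
rewrite big_nat_recr //= IH //; have := f_anti m n mn; have := f_nonincr n; lia.
Qed.

Lemma adiff_gt d e j : (d < j)%N -> adiff d e j = 0%N.
Proof. by move=> dj; rewrite /adiff /eext leqNgt dj (leqNgt j.+1) ltnW. Qed.

Lemma eext_nonincr d e : (forall i, (i < d)%N -> (e i.+1 <= e i)%N) ->
  forall j, (eext d e j.+1 <= eext d e j)%N.
Proof.
move=> e_nonincr j; rewrite /eext; case: (leqP j.+1 d) => // jd.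
by rewrite (ltnW jd) e_nonincr.
Qed.

Lemma ncomp_below_hilbP d e n D :
  (forall i, (i < d)%N -> (e i.+1 <= e i)%N) -> (d < n)%N -> (e 0 <= D)%N ->
  ((ncomp_below (rev (mkseq (adiff d e) n)) D)%:R : rat) = hilbP d e D%:R.
Proof.
move=> e_nonincr dn eD.
have eext_n : eext d e n = 0%N by rewrite /eext leqNgt dn.
have sum_adiff m : (m <= n)%N -> (\sum_(m <= j < n) adiff d e j)%N = eext d e m.
  move=> mn; rewrite telescope_sumn_nonincr //; last exact: eext_nonincr.
  by rewrite eext_n subn0.
rewrite ncomp_below_formula; last by rewrite -(big_mkord xpredT (adiff d e)) sum_adiff.
under eq_bigr => m _ do rewrite sum_adiff 1?ltnW //.
rewrite -(subnKC dn) big_split_ord /= [X in _ + X]big1 ?addr0 => [|i _]; last first.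
  by rewrite /eext leqNgt leq_addr subr0 subrr.
by apply: eq_bigr => i _; rewrite /eext -ltnS ltn_ord.
Qed.

(** * Lexicographic order on sequences *)

Section SeqLexi.
Context {disp : Order.disp_t} {T : porderType disp}.
Local Open Scope order_scope.
Implicit Types s t : seqlexi T.

Lemma lexi_take k s t : s <= t -> (take k s <= take k t :> seqlexi T).
Proof.
elim: k s t => [|k IH] [|x s] [|y t] //=; rewrite !lexi_cons.
by case/andP=> -> /implyP st; apply/implyP => /st; exact: IH.
Qed.

Lemma ltxi_take k s t : (take k s < take k t :> seqlexi T) -> s < t.
Proof.
elim: k s t => [|k IH] [|x s] [|y t] //=; rewrite ?ltxx ?ltxis0 ?ltxi0s //.
by rewrite !ltxi_cons => /andP[-> /implyP st]; apply/implyP => /st; exact: IH.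
Qed.

Lemma ltxi_nthP x0 s t : size s = size t -> reflect
  (exists k, [/\ (k < size s)%N, forall j, (j < k)%N -> nth x0 s j = nth x0 t j
                 & nth x0 s k < nth x0 t k])
  (s < t).
Proof.
elim: s t => [|x s IH] [|y t] //= => [_|[size_st]].
  by rewrite ltxx; constructor=> -[k []].
rewrite ltxi_cons; apply: (iffP andP) => [[xy /implyP lt_st]|[[|k] [/= k_lt eq_lt lt_k]]].
- case: (boolP (y <= x)) => [yx|yNx].
    have /(IH t size_st) [k [k_lt eq_lt lt_k]] := lt_st yx.
    exists k.+1; split=> // -[|j] /=; last exact: eq_lt.
    by move=> _; apply/le_anti; rewrite xy yx.
  exists 0%N; split=> //=; rewrite lt_def xy andbT.
  by apply: contraNneq yNx => ->.
- by split; [exact: ltW | rewrite lt_geF].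
- have /= x_eq_y := eq_lt 0%N isT; rewrite x_eq_y lexx; split=> //.
  apply/implyP => _; apply/(IH t size_st); exists k; split=> //.
  by move=> j jk; exact: (eq_lt j.+1).
Qed.

End SeqLexi.

Lemma sub_count_lt (T : eqType) (a1 a2 : pred T) (s : seq T) (x : T) :
  subpred a1 a2 -> x \in s -> a2 x -> ~~ a1 x -> (count a1 s < count a2 s)%N.
Proof.
move=> a12; elim: s => // y s IH; rewrite inE => /orP[/eqP <-|x_s] a2x a1x /=.
  by rewrite a2x (negbTE a1x) add0n add1n ltnS sub_count.
have a12y : (a1 y <= a2 y)%N by case: (boolP (a1 y)) => // /a12 ->.
by rewrite -addnS leq_add // IH.
Qed.

(** * The lex-segment ideal L(a) *)

Section LexMonomials.
Variables (n : nat) (a : nat -> nat).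
Local Notation mon := 'X_{1..n.+1}.

Definition mlexi (u : mon) : seqlexi nat := u.

Definition mexp (u : mon) (k : nat) : nat := nth 0%N (mlexi u) k.

Lemma mexpE (u : mon) (i : 'I_n.+1) : u i = mexp u i.
Proof. exact: mnm_nth. Qed.

Lemma mexp_inord (u : mon) k : (k <= n)%N -> u (inord k) = mexp u k.
Proof. by move=> kn; rewrite mexpE inordK. Qed.

Lemma size_mlexi (u : mon) : size (mlexi u) = n.+1.
Proof. exact: size_tuple. Qed.

Lemma sumn_mlexi (u : mon) : sumn (mlexi u) = mdeg u.
Proof. by rewrite sumnE. Qed.

Lemma lemP (v u : mon) : reflect (forall i, (i <= n)%N -> (mexp v i <= mexp u i)%N) (lem v u).
Proof.
apply: (iffP mnm_lepP) => [le_vu i ni|le_vu i]; first by rewrite -!mexp_inord.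
by rewrite !mexpE le_vu // -ltnS.
Qed.

Lemma lexgt_mlexi (u v : mon) : lexgt u v = (mlexi v < mlexi u)%O.
Proof.
have size_vu : size (mlexi v) = size (mlexi u) by rewrite !size_mlexi.
apply/existsP/(ltxi_nthP 0%N size_vu) => [[k /andP[/forallP eq_vu lt_k]]|].
  exists k; rewrite size_mlexi ltn_ord -/(mexp v k) -/(mexp u k) -!mexpE ltEnat.
  split=> // j jk; change (mexp v j = mexp u j).
  have jn : (j <= n)%N by rewrite -ltnS (ltn_trans jk).
  by have := eq_vu (inord j); rewrite inordK // jk !mexp_inord // => /eqP ->.
rewrite size_mlexi => -[k [kn eq_vu lt_k]]; exists (Ordinal kn).
rewrite !mexpE; apply/andP; split; last exact: lt_k.
by apply/forallP => j; apply/implyP => jk; rewrite !mexpE /mexp eq_vu.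
Qed.

Definition arev (k : nat) : nat := a (n.-1 - k).

Definition Lseq : seqlexi nat := rev (mkseq a n).

Lemma size_Lseq : size Lseq = n.
Proof. by rewrite size_rev size_mkseq. Qed.

Lemma nth_Lseq k : (k < n)%N -> nth 0%N Lseq k = arev k.
Proof. by move=> kn; rewrite nth_rev size_mkseq // nth_mkseq /arev; [congr a|]; lia. Qed.

Definition Lexp (k : nat) : mon :=
  [multinom if (i < k)%N then arev i
            else if i == k :> nat then (arev k + (k < n.-1))%N else 0%N | i < n.+1].

Lemma mexp_Lexp k i : (i <= n)%N -> mexp (Lexp k) i =
  if (i < k)%N then arev i else if i == k then (arev k + (k < n.-1))%N else 0%N.
Proof. by move=> i_le_n; rewrite -mexp_inord // mnmE inordK. Qed.

Definition Lmem (u : mon) : bool := [exists k : 'I_n, lem (Lexp k) u].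

Lemma Lmem_lexi (u : mon) : (0 < n)%N -> Lmem u = ~~ (take n (mlexi u) < Lseq :> seqlexi nat)%O.
Proof.
move=> n_gt0; have size_take : size (take n (mlexi u)) = size Lseq.
  by rewrite size_takel ?size_mlexi // size_Lseq.
have nth_take j : (j < n)%N -> nth 0%N (take n (mlexi u)) j = mexp u j.
  by move=> jn; rewrite nth_take.
apply/idP/idP => [/existsP[k /lemP Lexp_le]|not_lt].
  apply/(ltxi_nthP 0%N size_take) => -[j []]; rewrite size_take size_Lseq => jn.
  rewrite nth_take // nth_Lseq // => eq_before; rewrite ltEnat /=.
  have kn := ltn_ord k; have := Lexp_le j (ltnW jn); have := Lexp_le k (ltnW kn).
  rewrite !mexp_Lexp ?(ltnW jn) ?(ltnW kn) // ltnn eqxx.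
  case: (ltngtP j k) => [jk|kj|<-] le_k le_j lt_j; try lia.
  have := eq_before k kj; rewrite nth_take ?nth_Lseq // => eq_k.
  by move: le_k; rewrite eq_k (_ : (k < n.-1)%N) //; lia.
have stop_ex : exists k, (k < n)%N && ((k == n.-1) || (mexp u k != arev k)).
  by exists n.-1; rewrite eqxx ltn_predL n_gt0.
case: (ex_minnP stop_ex) => k /andP[kn k_stop] k_min.
have eq_before j : (j < k)%N -> mexp u j = arev j.
  move=> jk; apply/eqP/negPn/negP => neq_j.
  by have := k_min j; rewrite neq_j orbT andbT (ltn_trans jk kn) leqNgt jk => /(_ isT).
have ge_k : (arev k <= mexp u k)%N.
  rewrite leqNgt; apply/negP => lt_k; move/negP: not_lt; apply.
  apply/(ltxi_nthP 0%N size_take); exists k.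
  rewrite size_take size_Lseq nth_take // nth_Lseq //; split=> // j jk.
  by rewrite nth_take ?nth_Lseq ?eq_before // (ltn_trans jk).
apply/existsP; exists (Ordinal kn); apply/lemP => i ni; rewrite mexp_Lexp //.
case: (ltngtP i k) => [/eq_before ->|//|->]; rewrite ?leqnn //.
case: (ltnP k n.-1) => [k_lt|_]; rewrite ?addn0 ?addn1 //.
by rewrite ltn_neqAle ge_k andbT eq_sym; move: k_stop; rewrite ltn_eqF.
Qed.

Lemma Lexp_le_cases k k' : (k < n)%N -> (k' < n)%N -> lem (Lexp k') (Lexp k) ->
  k' = k \/ [/\ (k < k')%N, k' = n.-1 & forall q, (k < q < n)%N -> arev q = 0%N].
Proof.
move=> kn k'n /lemP le_k'k.
have le_at i : (i < n)%N -> (mexp (Lexp k') i <= mexp (Lexp k) i)%N.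
  by move=> i_lt_n; apply: le_k'k; exact: ltnW.
case: (ltngtP k' k) => [k'k|kk'|->]; [exfalso | right | by left].
  by have := le_at k' k'n; rewrite !mexp_Lexp ?(ltnW k'n) // k'k ltnn eqxx; lia.
have k'_last : k' = n.-1.
  case: (ltnP k' n.-1) => [k'_lt|]; last lia.
  have := le_at k' k'n; rewrite !mexp_Lexp ?(ltnW k'n) // ltnn eqxx k'_lt.
  by rewrite (leq_gtF (ltnW kk')) (gtn_eqF kk') addn1.
split=> // q /andP[kq qn]; have := le_at q qn.
rewrite !mexp_Lexp ?(ltnW qn) // k'_last ltnn addn0 (leq_gtF (ltnW kq)) (gtn_eqF kq).
by case: (ltngtP q n.-1) => [||->]; lia.
Qed.

Lemma Lexp_last_le k : (k < n)%N -> (forall q, (k < q < n)%N -> arev q = 0%N) ->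
  lem (Lexp n.-1) (Lexp k).
Proof.
move=> kn arev0; apply/lemP => i ni; rewrite !mexp_Lexp // ltnn addn0.
case: (ltngtP i k) => [ik|ki|ik]; first by rewrite (_ : (i < n.-1)%N) //; lia.
  by case: ltngtP => [i_lt||i_last]; rewrite ?arev0 //; lia.
by subst i; case: (ltngtP k n.-1) => [||->]; rewrite ?addn0 ?leq_addr.
Qed.

Definition Lexp_minimal (k : nat) : Prop :=
  forall k' : 'I_n, lem (Lexp k') (Lexp k) -> Lexp k' = Lexp k.

Lemma Lexp_minimalP k : (k < n)%N ->
  Lexp_minimal k <-> (k = n.-1 \/ exists2 q, (k < q < n)%N & (0 < arev q)%N).
Proof.
move=> kn; split=> [k_min|k_cases k' /(Lexp_le_cases kn (ltn_ord k'))]; last first.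
  case=> [-> //|[kk' k'_last arev0]]; case: k_cases => [k_last|[q kqn]]; first lia.
  by rewrite arev0.
case: (ltnP k n.-1) => [k_lt|]; last by left; lia.
case: (boolP [exists q : 'I_n, (k < q)%N && (0 < arev q)%N]) => [/existsP[q]|no_q].
  by case/andP=> kq arev_q; right; exists q; rewrite ?kq ?ltn_ord.
have arev0 q : (k < q < n)%N -> arev q = 0%N.
  case/andP=> kq qn; apply/eqP; rewrite -leqn0 leqNgt.
  by have /existsPn/(_ (Ordinal qn)) := no_q; rewrite kq.
have last_lt : (n.-1 < n)%N by rewrite ltn_predL (leq_ltn_trans _ kn).
have /(congr1 (mexp^~ k)) := k_min (Ordinal last_lt) (Lexp_last_le kn arev0).
by rewrite !mexp_Lexp ?(ltnW kn) // k_lt ltnn eqxx; lia.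
Qed.

Section Positive.
Hypothesis n_gt0 : (0 < n)%N.

Lemma Lmem_lexge (u v : mon) : Lmem u -> lexge v u -> Lmem v.
Proof.
rewrite /lexge lexgt_mlexi !Lmem_lexi // -!leNgt => u_ge /orP[/eqP -> //|lt_uv].
exact: le_trans u_ge (lexi_take n (ltW lt_uv)).
Qed.

Lemma lexgt_Lmem (u v : mon) : ~~ Lmem u -> Lmem v -> lexgt v u.
Proof.
rewrite lexgt_mlexi !Lmem_lexi // negbK -leNgt => lt_u le_v.
exact: (ltxi_take (k := n)) (lt_le_trans lt_u le_v).
Qed.

Lemma Lmem_shift c (u : mon) : Lmem (U_(ord_max) *+ c + u)%MM = Lmem u.
Proof.
rewrite !Lmem_lexi //; congr (~~ (_ < _)%O); apply: (@eq_from_nth _ 0%N).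
  by rewrite !size_takel ?size_mlexi.
move=> i; rewrite size_takel ?size_mlexi // => i_lt_n; rewrite !nth_take //.
rewrite -[nth _ _ i]/(mexp _ i) -[nth _ (mlexi u) i]/(mexp u i) -!mexp_inord ?(ltnW i_lt_n) //.
by rewrite mnmDE mulmnE mnm1E -val_eqE /= inordK ?gtn_eqF // ltnW.
Qed.

End Positive.

End LexMonomials.

(** * Monomial ideals and their graded pieces *)

Lemma lem_anti (n : nat) (u v : 'X_{1..n}) : lem u v -> lem v u -> u = v.
Proof.
move=> /mnm_lepP le_uv /mnm_lepP le_vu; apply/mnmP => i.
by apply/eqP; rewrite eqn_leq le_uv le_vu.
Qed.

Lemma mpolyX_inj (K : fieldType) (n : nat) (u v : 'X_{1..n}) : 'X_[K, u] = 'X_[v] -> u = v.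
Proof. by move=> /(congr1 (@msupp _ _)); rewrite !msuppX => -[]. Qed.

Section MonomialIdeals.
Variables (K : fieldType) (n : nat).
Local Notation mon := 'X_{1..n.+1}.
Local Notation S := {mpoly K[n.+1]}.

Lemma mdeg_lem (w m : mon) : lem w m -> (mdeg w <= mdeg m)%N.
Proof. by move=> /submK <-; rewrite mdegD leq_addl. Qed.

Lemma maxpow_monomial j (g : S) : (exists m : mon, mdeg m = j /\ g = 'X_[m]) <->
  exists2 w : mon, mdeg w = j & g = 'X_[w].
Proof. by split=> [[m [? ?]]|[m ? ?]]; exists m. Qed.

Lemma prod_xv_exp (c : nat -> nat) k : (k <= n.+1)%N ->
  \prod_(j < k) (xv j : S) ^+ c j =
  'X_[[multinom if (i < k)%N then c (i : nat) else 0%N | i < n.+1]].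
Proof.
elim: k => [|k IH] kn.
  by rewrite big_ord0 -mpolyX0; congr mpolyX; apply/mnmP => i; rewrite mnmE mnm0E.
rewrite big_ord_recr /= IH ?(ltnW kn) // /xv mpolyXn -mpolyXD; congr mpolyX.
apply/mnmP => i; rewrite mnmDE !mnmE mulmnE mnm1E -val_eqE /= inordK // ltnS.
by case: (ltngtP i k) => [||->]; rewrite ?mul0n ?addn0 ?mul1n.
Qed.

Lemma Lgen_Lexp (a : nat -> nat) k : (k < n)%N -> Lgen a k = 'X_[Lexp n a k] :> S.
Proof.
move=> kn; rewrite /Lgen (prod_xv_exp (arev n a)); last exact: leq_trans (ltnW kn) _.
rewrite /xv mpolyXn -mpolyXD; congr mpolyX; apply/mnmP => i.
rewrite mnmDE !mnmE mulmnE mnm1E -val_eqE /= inordK; last exact: ltnW.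
by case: (ltngtP i k) => [||ik]; rewrite ?mul0n ?addn0 ?mul1n // ik.
Qed.

Lemma lem_msupp_mulX (p : S) (w m : mon) : m \in msupp (p * 'X_[w]) -> lem w m.
Proof. by rewrite (perm_mem (msuppMX p w)) => /mapP[m' _ ->]; exact: lem_addr. Qed.

Lemma ideal_gen0 (G : S -> Prop) : ideal_gen G 0.
Proof. by exists [::]; rewrite big_nil. Qed.

Lemma ideal_genD (G : S -> Prop) f g :
  ideal_gen G f -> ideal_gen G g -> ideal_gen G (f + g).
Proof.
move=> [s [sG ->]] [t [tG ->]]; exists (s ++ t); split; last by rewrite big_cat.
by move=> p; rewrite mem_cat => /orP[/sG|/tG].
Qed.

Lemma ideal_genM (G : S -> Prop) r f : ideal_gen G f -> ideal_gen G (r * f).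
Proof.
move=> [s [sG ->]]; exists [seq (r * p.1, p.2) | p <- s]; split.
  by move=> q /mapP[p /sG Gp ->].
by rewrite big_map mulr_sumr; apply: eq_bigr => p _; rewrite mulrA.
Qed.

Lemma ideal_gen_is_ideal (G : S -> Prop) : is_ideal (ideal_gen G).
Proof. by split; [exact: ideal_gen0 | exact: ideal_genD | exact: ideal_genM]. Qed.

Lemma ideal_gen_iff (G1 G2 : S -> Prop) f :
  (forall g, G1 g <-> G2 g) -> ideal_gen G1 f <-> ideal_gen G2 f.
Proof. by move=> G12; split=> -[s [sG ->]]; exists s; split=> // p /sG /G12. Qed.

Section MonomialGenerators.
Variables (G : S -> Prop) (Q : mon -> Prop).
Hypothesis G_monomial : forall g, G g <-> exists2 w, Q w & g = 'X_[w].

Lemma ideal_gen_msupp f :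
  ideal_gen G f -> forall m, m \in msupp f -> exists2 w, Q w & lem w m.
Proof.
move=> [s [sG ->]]; elim: s sG => [|p s IH] sG m.
  by rewrite big_nil mcoeff_msupp mcoeff0 eqxx.
rewrite big_cons => /msuppD_le; rewrite mem_cat => /orP[m_p|]; last first.
  by apply: IH => q q_s; apply: sG; rewrite inE q_s orbT.
have /G_monomial[w Qw p2_w] := sG p (mem_head _ _).
by exists w => //; apply: (@lem_msupp_mulX p.1); rewrite -p2_w.
Qed.

Lemma msupp_ideal_gen f :
  (forall m, m \in msupp f -> exists2 w, Q w & lem w m) -> ideal_gen G f.
Proof.
move=> f_gen; rewrite (mpolyE f); elim: (msupp f) f_gen => [|m r IH] r_gen.
  by rewrite big_nil; exact: ideal_gen0.
rewrite big_cons; apply: ideal_genD; last first.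
  by apply: IH => m' m'_r; apply: r_gen; rewrite inE m'_r orbT.
have [w Qw le_wm] := r_gen m (mem_head _ _).
exists [:: (f@_m *: 'X_[m - w], 'X_[w])]; split.
  by move=> p; rewrite inE => /eqP -> /=; apply/G_monomial; exists w.
by rewrite big_seq1 /= -scalerAl -mpolyXD submK.
Qed.

End MonomialGenerators.

End MonomialIdeals.

Section MonomialSpans.
Variables (K : fieldType) (n : nat).
Local Notation mon := 'X_{1..n.+1}.
Local Notation S := {mpoly K[n.+1]}.

Lemma dim_is_unique (V : S -> Prop) D1 D2 : dim_is V D1 -> dim_is V D2 -> D1 = D2.
Proof.
move=> [[s1 [<- [s1V s1_indep]]] max1] [[s2 [<- [s2V s2_indep]]] max2].
by apply/eqP; rewrite eqn_leq max1 ?max2.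
Qed.

Lemma lin_indep_monomials (B : seq mon) : uniq B -> lin_indep [seq 'X_[m] : S | m <- B].
Proof.
move=> B_uniq c; rewrite size_map => size_c sum0 i i_lt.
have := congr1 (mcoeff (nth 0%MM B i)) sum0; rewrite mcoeff0 raddf_sum /=.
rewrite (bigD1 (Ordinal i_lt)) //= big1 ?addr0.
  by rewrite mcoeffZ (nth_map 0%MM) // mcoeffX eqxx mulr1.
move=> j; rewrite -val_eqE /= => j_neq_i.
by rewrite mcoeffZ (nth_map 0%MM) // mcoeffX nth_uniq // (negbTE j_neq_i) mulr0.
Qed.

Lemma size_lin_indep_supported (B : seq mon) (s : seq S) :
  (forall i, (i < size s)%N -> {subset msupp s`_i <= B}) -> lin_indep s ->
  (size s <= size B)%N.
Proof.
move=> s_B s_indep.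
pose M : 'M[K]_(size s, size B) := \matrix_(i, j) (s`_i)@_(nth 0%MM B j).
suff /eqP <- : row_free M by exact: rank_leq_col.
rewrite -kermx_eq0; apply/eqP/row_matrixP => r; rewrite row0.
have := sub_kermxP (row_sub r (kermx M)); move: (row r _) => v vM0.
pose c := [seq v 0 i | i <- enum 'I_(size s)].
have c_v (i : 'I_(size s)) : c`_i = v 0 i.
  by rewrite (nth_map i) ?size_enum_ord // nth_ord_enum.
have sum0 : \sum_(i < size s) c`_i *: s`_i = 0.
  apply/mpolyP => m; rewrite mcoeff0 raddf_sum /=.
  case: (boolP (m \in B)) => m_B.
    have m_idx : (index m B < size B)%N by rewrite index_mem.
    have := congr1 (fun A : 'rV[K]_(size B) => A 0 (Ordinal m_idx)) vM0.
    rewrite !mxE => vM0_m; apply: etrans vM0_m; apply: eq_bigr => i _.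
    by rewrite mcoeffZ c_v mxE /= nth_index.
  rewrite big1 // => i _; rewrite mcoeffZ memN_msupp_eq0 ?mulr0 //.
  by apply: contra m_B; exact: s_B.
apply/rowP => i; rewrite mxE -c_v; apply: s_indep sum0 _ _ => //.
by rewrite size_map size_enum_ord.
Qed.

Lemma dim_monomial_span (V : S -> Prop) (B : seq mon) : uniq B ->
  (forall f, V f <-> {subset msupp f <= B}) -> dim_is V (size B).
Proof.
move=> B_uniq V_B; split=> [|s sV]; last by apply: size_lin_indep_supported => i /sV/V_B.
exists [seq 'X_[m] | m <- B]; rewrite size_map; split=> //; split; last exact: lin_indep_monomials.
move=> i i_lt; rewrite (nth_map 0%MM) //; apply/V_B => m.
by rewrite msuppX inE => /eqP ->; exact: mem_nth.
Qed.

Definition mons (p : pred mon) (D : nat) : seq mon :=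
  [seq bmnm v | v <- enum {: 'X_{1..n.+1 < D.+1}} & (mdeg (bmnm v) == D) && p (bmnm v)].

Lemma uniq_mons p D : uniq (mons p D).
Proof.
rewrite map_inj_uniq ?filter_uniq -?enumT ?enum_uniq //.
by move=> v w; exact: val_inj.
Qed.

Lemma mem_mons p D m : (m \in mons p D) = (mdeg m == D) && p m.
Proof.
apply/mapP/idP => [[v] |/andP[/eqP m_deg pm]]; first by rewrite mem_filter => /andP[v_D _] ->.
have m_lt : (mdeg m < D.+1)%N by rewrite m_deg.
by exists (BMultinom m_lt); rewrite // mem_filter /= m_deg eqxx pm mem_enum.
Qed.

Lemma mons_filter p D : mons p D = filter p (mons predT D).
Proof.
rewrite /mons; elim: (enum _) => //= v vs IH.
by case: (mdeg (bmnm v) == D); case: (boolP (p (bmnm v))) => pv; rewrite /= ?pv ?(negbTE pv) IH.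
Qed.

Lemma size_mons_predC p D :
  size (mons predT D) = (size (mons p D) + size (mons (predC p) D))%N.
Proof. by rewrite (mons_filter p) (mons_filter (predC p)) !size_filter count_predC. Qed.

Lemma perm_mons_compositions D :
  perm_eq [seq mlexi m | m <- mons predT D] (compositions n.+1 D).
Proof.
apply: uniq_perm; [|exact: uniq_compositions|].
  by rewrite map_inj_uniq ?uniq_mons // => u v /val_inj/val_inj.
move=> s; rewrite mem_compositions; apply/mapP/idP.
  by move=> [m]; rewrite mem_mons andbT => /eqP m_D ->; rewrite size_mlexi sumn_mlexi m_D !eqxx.
case/andP=> /eqP size_s /eqP sum_s; exists (Multinom (Tuple (introT eqP size_s))) => //.
by rewrite mem_mons andbT -sumn_mlexi sum_s.
Qed.

Lemma size_mons_lexi (r : pred (seq nat)) D :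
  size (mons (fun m => r (mlexi m)) D) = count r (compositions n.+1 D).
Proof.
rewrite mons_filter size_filter -(permP (perm_mons_compositions D)) [RHS]count_map.
by apply: eq_count.
Qed.

Lemma dim_homog D : dim_is (homog_of D : S -> Prop) (size (mons predT D)).
Proof.
apply: dim_monomial_span (uniq_mons _ _) _ => f; split=> [f_D m m_f|f_D m m_f].
  by rewrite mem_mons andbT f_D.
by have := f_D m m_f; rewrite mem_mons andbT => /eqP.
Qed.

Lemma dim_piece_of_hilbfun (I : S -> Prop) (p : pred mon) D h :
  hilbfun_is I D h -> h = size (mons (predC p) D) -> dim_is (piece I D) (size (mons p D)).
Proof.
move=> [dS [dI [dim_S [dim_I ->]]]] h_eq.
have dS_eq := dim_is_unique dim_S (dim_homog D).
have dI_le : (dI <= dS)%N.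
  have [[s [<- [sI s_indep]]] _] := dim_I.
  by apply: (proj2 dim_S) => // i /sI[].
suff size_eq : size (mons p D) = dI by rewrite size_eq.
by move: h_eq dI_le; rewrite dS_eq (size_mons_predC p); lia.
Qed.

End MonomialSpans.

(** * Hilbert function and saturation of L(a) *)

Section LexIdeal.
Variables (K : fieldType) (n : nat) (a : nat -> nat).
Local Notation mon := 'X_{1..n.+1}.
Local Notation S := {mpoly K[n.+1]}.
Local Notation Lmem := (@Lmem n a).

Lemma Lgen_monomial (g : S) : (exists2 k, (k < n)%N & g = Lgen a k) <->
  exists2 w, (exists k : 'I_n, w = Lexp n a k) & g = 'X_[w].
Proof.
split=> [[k kn ->]|[_ [k ->] ->]]; last by exists k; rewrite ?Lgen_Lexp.
by exists (Lexp n a k); [exists (Ordinal kn) | exact: Lgen_Lexp].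
Qed.

Lemma LidealP (f : S) : Lideal a f <-> (forall m, m \in msupp f -> Lmem m).
Proof.
split=> [/(ideal_gen_msupp Lgen_monomial) f_gen m /f_gen[_ [k ->]] le_km|f_L].
  by apply/existsP; exists k.
apply: (msupp_ideal_gen Lgen_monomial) => m /f_L /existsP[k le_km].
by exists (Lexp n a k) => //; exists k.
Qed.

Lemma msupp_hcomp i (f : S) : {subset msupp (hcomp i f) <= msupp f}.
Proof.
move=> m; apply: contraLR => m_f; rewrite mcoeff_msupp negbK /hcomp raddf_sum /=.
apply/eqP; rewrite big_seq_cond big1 // => m' /andP[m'_f _].
rewrite mcoeffZ mcoeffX; case: eqP => [m'_m|_]; last by rewrite mulr0.
by move: m_f; rewrite -m'_m m'_f.
Qed.

Lemma Lideal_homog : homog_ideal (Lideal a : S -> Prop).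
Proof.
split; first exact: ideal_gen_is_ideal.
by move=> f /LidealP f_L i; apply/LidealP => m /msupp_hcomp /f_L.
Qed.

Lemma dim_piece_Lideal D : dim_is (piece (Lideal a) D : S -> Prop) (size (mons Lmem D)).
Proof.
apply: dim_monomial_span (uniq_mons _ _) _ => f; split=> [[/LidealP f_L f_D] m m_f|f_D].
  by rewrite mem_mons f_D // eqxx f_L.
split=> [|m /f_D]; last by rewrite mem_mons => /andP[/eqP].
by apply/LidealP => m /f_D; rewrite mem_mons => /andP[].
Qed.

Lemma hilbfun_Lideal D : hilbfun_is (Lideal a : S -> Prop) D (size (mons (predC Lmem) D)).
Proof.
exists (size (mons (predT : pred mon) D)), (size (mons Lmem D)).
split; first exact: dim_homog.
by split; [exact: dim_piece_Lideal | rewrite (size_mons_predC Lmem) addKn].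
Qed.

Lemma lexrank_mons (u : mon) : lexrank u = size (mons (lexge^~ u) (mdeg u)).
Proof. by rewrite /lexrank cardE /enum_mem size_map !size_filter -enumT. Qed.

Section Positive.
Hypothesis n_gt0 : (0 < n)%N.

Lemma size_mons_notLmem D : size (mons (predC Lmem) D) = ncomp_below (Lseq n a) D.
Proof.
rewrite /ncomp_below size_Lseq -size_mons_lexi (mons_filter (predC Lmem)) [in RHS]mons_filter.
by congr size; apply: eq_filter => m; rewrite /= Lmem_lexi ?negbK.
Qed.

Lemma lexrank_Lmem (u : mon) : Lmem u -> (lexrank u <= size (mons Lmem (mdeg u)))%N.
Proof.
move=> u_L; rewrite lexrank_mons (mons_filter Lmem) (mons_filter (lexge^~ u)) !size_filter.
by apply: sub_count => v; exact: Lmem_lexge.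
Qed.

Lemma lexrank_notLmem (u : mon) : ~~ Lmem u -> (size (mons Lmem (mdeg u)) < lexrank u)%N.
Proof.
move=> u_notL; rewrite lexrank_mons (mons_filter Lmem) (mons_filter (lexge^~ u)) !size_filter.
apply: (@sub_count_lt _ _ _ _ u); rewrite /lexge ?eqxx //; last by rewrite mem_mons eqxx.
by move=> v v_L; rewrite /= (lexgt_Lmem n_gt0 u_notL v_L) orbT.
Qed.

Section Saturation.
Variables (I : S -> Prop) (D0 : nat).
Hypothesis dim_I : forall D, (D0 <= D)%N -> dim_is (piece I D) (size (mons Lmem D)).

Lemma lex_selected_Lmem (u : mon) : (D0 <= mdeg u)%N -> lex_selected I u <-> Lmem u.
Proof.
move=> u_deg; split=> [[D [dim_D rank_le]]|u_L]; last first.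
  by exists (size (mons Lmem (mdeg u))); split; [exact: dim_I | exact: lexrank_Lmem].
rewrite (dim_is_unique dim_D (dim_I u_deg)) in rank_le.
by move: rank_le; apply: contraLR => /lexrank_notLmem; rewrite -ltnNge.
Qed.

Lemma lexsat_Lideal (f : S) : lexsat I f <-> Lideal a f.
Proof.
split=> [[j [_ f_sat]]|f_L].
  apply/LidealP => m m_f.
  (* x_n^(D0 + j) lies in <x>^j and moves x^m into degrees >= D0 without
     changing membership in L. *)
  pose w : mon := (U_(ord_max) *+ D0 + U_(ord_max) *+ j)%MM.
  have X_w : maxpow j ('X_[w] : S).
    rewrite mpolyXD; apply: ideal_genM; exists [:: (1, 'X_[U_(ord_max) *+ j])].
    split; last by rewrite big_seq1 mul1r.
    move=> p; rewrite inE => /eqP -> /=.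
    by exists (U_(ord_max) *+ j)%MM; rewrite mdegMn mdeg1 mul1n.
  have wm_f : (w + m)%MM \in msupp (f * 'X_[w]) by rewrite mcoeff_msupp mcoeffMX -mcoeff_msupp.
  have deg_wm : (D0 <= mdeg (w + m))%N by rewrite !mdegD mdegMn mdeg1 mul1n -addnA leq_addr.
  by have /(lex_selected_Lmem deg_wm) := f_sat _ X_w _ wm_f; rewrite -addmA !Lmem_shift.
exists (maxn 1 D0); split=> [|g g_max u u_fg]; first exact: leq_maxl.
have [w w_deg le_wu] := ideal_gen_msupp (maxpow_monomial _) (ideal_genM f g_max) u_fg.
apply/lex_selected_Lmem; last by move/LidealP: (ideal_genM g f_L); rewrite mulrC; apply.
by rewrite (leq_trans (leq_maxr 1 D0)) // -w_deg mdeg_lem.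
Qed.

Lemma lexsat_monomial (v : mon) : lexsat I 'X_[v] <-> Lmem v.
Proof.
rewrite lexsat_Lideal LidealP msuppX.
by split=> [/(_ v (mem_head _ _)) //|v_L m]; rewrite inE => /eqP ->.
Qed.

End Saturation.

End Positive.

End LexIdeal.

Lemma size_notLmem_hilbP (n d : nat) (e : nat -> nat) D :
  (forall i, (i < d)%N -> (e i.+1 <= e i)%N) -> (d < n)%N -> (e 0 <= D)%N ->
  ((size (mons (predC (@Lmem n (adiff d e))) D))%:R : rat) = hilbP d e D%:R.
Proof.
move=> e_nonincr dn eD.
by rewrite size_mons_notLmem ?ncomp_below_hilbP //; apply: leq_ltn_trans dn.
Qed.

(** * Generators of L(a) *)

Section ExplicitGenerators.
Variables (K : fieldType) (n d : nat) (a : nat -> nat).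
Hypotheses (dn : (d < n)%N) (a_gt : forall j, (d < j)%N -> a j = 0%N).
Local Notation S := {mpoly K[n.+1]}.

Lemma Lgen_tail k : (k <= d)%N ->
  Lgen a (n - d.+1 + k) = (\prod_(i < k) (xv (n - d.+1 + i) : S) ^+ a (d - i)) *
                          (xv (n - d.+1 + k) : S) ^+ (a (d - k) + (k < d))%N.
Proof.
move=> kd; rewrite /Lgen big_split_ord /= [X in X * _ * _]big1 ?mul1r; last first.
  by move=> i _; rewrite a_gt ?expr0 //; have := ltn_ord i; lia.
rewrite (_ : n.-1 - (n - d.+1 + k) = d - k)%N; last lia.
rewrite (_ : (n - d.+1 + k < n.-1)%N = (k < d)%N); last by apply/idP/idP; lia.
by congr (_ * _); apply: eq_bigr => i _; congr (_ ^+ a _); lia.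
Qed.

Lemma Lgen_xv j : (j < n - d.+1)%N -> Lgen a j = xv j :> S.
Proof.
move=> jb; rewrite /Lgen big1 ?mul1r => [|i _]; last first.
  by rewrite a_gt ?expr0 //; have := ltn_ord i; lia.
have j_last : (j < n.-1)%N by lia.
by rewrite a_gt ?j_last ?expr1 //; lia.
Qed.

Lemma Lgen_mid k : (k < d)%N -> Lgen a (n - d.+1 + k) = midgen d a k :> S.
Proof. by move=> kd; rewrite Lgen_tail ?(ltnW kd) // kd addn1. Qed.

Lemma Lgen_last : Lgen a n.-1 = lastgen d a d :> S.
Proof.
rewrite (_ : n.-1 = n - d.+1 + d)%N; last lia.
by rewrite Lgen_tail // ltnn addn0 /lastgen big_ord_recr.
Qed.

Lemma Lgen_explicit (g : S) :
  (exists2 k, (k < n)%N & g = Lgen a k) <-> explicit_gens d a g.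
Proof.
split=> [[k kn ->]|[[j jb ->]|[[k kd ->]|->]]]; last first.
- by exists n.-1; rewrite ?Lgen_last //; lia.
- by exists (n - d.+1 + k)%N; rewrite ?Lgen_mid //; lia.
- by exists j; rewrite ?Lgen_xv //; lia.
case: (ltnP k (n - d.+1)) => kb; first by left; exists k; rewrite ?Lgen_xv.
case: (ltnP k n.-1) => k_last; last by right; right; rewrite (_ : k = n.-1) ?Lgen_last //; lia.
right; left; exists (k - (n - d.+1))%N; first lia.
by rewrite -Lgen_mid ?subnKC //; lia.
Qed.

Lemma lastgen_trunc l : (l < d)%N -> (forall j, (j <= l)%N -> a j = 0%N) ->
  lastgen d a d = lastgen d a (d - l.+1) :> S.
Proof.
move=> ld a_le; rewrite /lastgen.
rewrite -!(big_mkord xpredT (fun j => (xv (n - d.+1 + j) : S) ^+ a (d - j))).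
rewrite (@big_cat_nat _ _ _ (d - l.+1).+1) //=; last lia.
rewrite [X in _ * X]big_nat_cond [X in _ * X]big1 ?mulr1 // => i /andP[/andP[i_ge i_lt] _].
by rewrite a_le ?expr0 //; lia.
Qed.

End ExplicitGenerators.

Section MinimalGenerators.
Variables (K : fieldType) (n : nat) (a : nat -> nat) (J : {mpoly K[n.+1]} -> Prop).
Local Notation mon := 'X_{1..n.+1}.
Hypothesis J_mon : forall v : mon, J 'X_[v] <-> Lmem a v.

Lemma min_mon_gen_Lexp (u : mon) :
  min_mon_gen J u <-> exists k : 'I_n, u = Lexp n a k /\ Lexp_minimal n a k.
Proof.
have Lexp_J (k : 'I_n) : J 'X_[Lexp n a k] by apply/J_mon/existsP; exists k; exact: lepm_refl.
split=> [[/J_mon/existsP[k le_ku] u_min]|[k [-> k_min]]].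
  have u_eq : Lexp n a k = u by apply: u_min.
  by exists k; split=> // k' le_k'k; rewrite u_eq; apply: u_min; rewrite -?u_eq.
split=> [|v /J_mon/existsP[k' le_k'v] le_vk]; first exact: Lexp_J.
have le_kv : lem (Lexp n a k) v by rewrite -(k_min k' (lepm_trans le_k'v le_vk)).
exact: lem_anti le_vk le_kv.
Qed.

End MinimalGenerators.

Section ExplicitMinimalGenerators.
Variables (K : fieldType) (n d : nat) (a : nat -> nat) (J : {mpoly K[n.+1]} -> Prop).
Local Notation mon := 'X_{1..n.+1}.
Hypotheses (dn : (d < n)%N) (a_gt : forall j, (d < j)%N -> a j = 0%N).
Hypothesis J_mon : forall v : mon, J 'X_[v] <-> Lmem a v.

Lemma Lexp_minimal_all k : (0 < a 0)%N -> (k < n)%N -> Lexp_minimal n a k.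
Proof.
move=> a0 kn; apply/Lexp_minimalP => //; case: (ltnP k n.-1) => [k_lt|]; last by left; lia.
by right; exists n.-1; rewrite ?k_lt ?ltn_predL /arev ?subnn //; lia.
Qed.

Lemma min_mon_gen_explicit (u : mon) : (0 < a 0)%N ->
  min_mon_gen J u <-> explicit_gens d a 'X_[K, u].
Proof.
move=> a0; rewrite (min_mon_gen_Lexp J_mon) -(Lgen_explicit dn a_gt).
split=> [[k [-> _]]|[k kn]]; first by exists k; rewrite ?Lgen_Lexp.
rewrite Lgen_Lexp // => /mpolyX_inj ->.
by exists (Ordinal kn); split=> //; exact: Lexp_minimal_all.
Qed.

Section Truncated.
Variable l : nat.
Hypotheses (ld : (l < d)%N) (a_le : forall j, (j <= l)%N -> a j = 0%N) (a_l : (0 < a l.+1)%N).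

Lemma Lexp_minimal_trunc k : (k < n)%N ->
  Lexp_minimal n a k <-> (k < n - l.+2)%N \/ k = n.-1.
Proof.
move=> kn; rewrite Lexp_minimalP //.
split=> [[->|[q /andP[kq qn]]]|[k_lt|->]]; [by right | | | by left].
- rewrite /arev => a_q; left; apply: leq_trans kq _.
  have : ~~ (n.-1 - q <= l)%N by apply: contraTN a_q => /a_le ->.
  lia.
- right; exists (n - l.+2)%N; first lia.
  by rewrite /arev (_ : n.-1 - (n - l.+2) = l.+1)%N //; lia.
Qed.

Lemma min_mon_gen_trunc (u : mon) :
  min_mon_gen J u <->
  [\/ exists2 j, (j < n - d.+1)%N & 'X_[K, u] = xv j,
      exists2 k, (k + l.+2 <= d)%N & 'X_[K, u] = midgen d a k
    | 'X_[K, u] = lastgen d a (d - l.+1)%N].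
Proof.
have Lxv := Lgen_xv K dn a_gt; have Lmid := Lgen_mid K dn a_gt.
have Llast := Lgen_last K dn a_gt; have Ltrunc := lastgen_trunc K dn ld a_le.
rewrite (min_mon_gen_Lexp J_mon); split=> [[k [-> /(Lexp_minimal_trunc (ltn_ord k))]]|].
  rewrite -Lgen_Lexp //; case=> [k_lt|->]; last by constructor 3; rewrite Llast Ltrunc.
  case: (ltnP k (n - d.+1)) => kb; first by constructor 1; exists k; rewrite ?Lxv.
  constructor 2; exists (k - (n - d.+1))%N; first lia.
  by rewrite -Lmid ?subnKC //; lia.
have Lexp_of k : (k < n)%N -> (k < n - l.+2)%N \/ k = n.-1 -> 'X_[K, u] = Lgen a k ->
    exists k : 'I_n, u = Lexp n a k /\ Lexp_minimal n a k.
  move=> kn k_min; rewrite Lgen_Lexp // => /mpolyX_inj ->.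
  by exists (Ordinal kn); split=> //; apply/Lexp_minimal_trunc.
case=> [[j jb]|[k kd]|]; [rewrite -Lxv // | rewrite -Lmid; last lia | ].
- by apply: Lexp_of; lia.
- by apply: Lexp_of; lia.
- by rewrite -Ltrunc -Llast; apply: Lexp_of; lia.
Qed.

End Truncated.

End ExplicitMinimalGenerators.

Theorem lemma3p3 (K : closedFieldType) (d n : nat) (e : nat -> nat) :
  (forall i, (i < d)%N -> (e i.+1 <= e i)%N) -> (0 < e d)%N -> (d < n)%N ->
  (* L^P_n is well defined: some homogeneous ideal has Hilbert polynomial P *)
  (exists I : {mpoly K[n.+1]} -> Prop, homog_ideal I /\ has_hilb_poly I (hilbP d e)) /\
  (forall I : {mpoly K[n.+1]} -> Prop,
    homog_ideal I -> has_hilb_poly I (hilbP d e) ->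
    (* (i) *)
    (forall f : {mpoly K[n.+1]}, lexsat I f <-> Lideal (adiff d e) f) /\
    (forall f : {mpoly K[n.+1]}, Lideal (adiff d e) f <-> ideal_gen (explicit_gens d (adiff d e)) f) /\
    (* (ii) *)
    (forall l, (l < d)%N -> (forall j, (j <= l)%N -> adiff d e j = 0%N) ->
       (0 < adiff d e l.+1)%N ->
       forall u : 'X_{1..n.+1},
         min_mon_gen (lexsat I) u <->
         [\/ exists2 j, (j < n - d.+1)%N & 'X_[K, u] = xv j,
             exists2 k, (k + l.+2 <= d)%N & 'X_[K, u] = midgen d (adiff d e) k
           | 'X_[K, u] = lastgen d (adiff d e) (d - l.+1)%N]) /\
    (adiff d e 0 != 0%N ->
       forall u : 'X_{1..n.+1},
         min_mon_gen (lexsat I) u <-> explicit_gens d (adiff d e) 'X_[K, u])).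
Proof.
move=> e_nonincr _ dn; have n_gt0 : (0 < n)%N by apply: leq_ltn_trans dn.
have a_gt := @adiff_gt d e; set a := adiff d e in a_gt *.
split.
  exists (Lideal a); split; first exact: Lideal_homog.
  exists (e 0) => D eD; exists (size (mons (predC (@Lmem n a)) D)).
  by split; [exact: hilbfun_Lideal | exact: size_notLmem_hilbP].
move=> I _ [D0 I_hilb].
have dim_I D : (maxn D0 (e 0) <= D)%N -> dim_is (piece I D) (size (mons (@Lmem n a) D)).
  rewrite geq_max => /andP[D0_le e0_le]; have [h [I_h I_P]] := I_hilb D D0_le.
  apply: dim_piece_of_hilbfun I_h _; apply/eqP.
  by rewrite -(eqr_nat rat) I_P size_notLmem_hilbP.
have J_mon := lexsat_monomial n_gt0 dim_I.
split; first by move=> f; exact: (lexsat_Lideal n_gt0 dim_I).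
split; first by move=> f; apply: ideal_gen_iff; exact: Lgen_explicit.
split; first by move=> l ld a_le a_l u; exact: min_mon_gen_trunc.
by move=> a0 u; apply: min_mon_gen_explicit; rewrite // lt0n.
Qed.
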